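(* Let $G$ and $H$ be non-empty locally finite graphs. If $N(G)\cong N(H)$ as simplicial complexes, then $K_2\times G$ and $K_2\times H$ are $\times$-homotopy equivalent.
   Context: A graph $G$ is a set $V(G)$ with a symmetric subset $E(G)\subset V(G)\times V(G)$ (loops allowed); $N(v)=\{w:(v,w)\in E(G)\}$; $G$ is locally finite if every $N(v)$ is finite. The neighborhood complex $N(G)$ is the simplicial complex whose vertices are the non-isolated vertices of $G$ and whose simplices are the finite subsets contained in some $N(v)$. $K_2\times G$ has vertex set $\{1,2\}\times V(G)$, $((i,x),(j,y))$ an edge iff $i\neq j$ and $(x,y)\in E(G)$. For $n\ge0$, $I_n$ is the graph with vertices $\{0,\dots,n\}$ and edges $(x,y)$ with $|x-y|\le1$ (so with loops). Graph homomorphisms $f,g:G\to H$ are $\times$-homotopic if for some $n\ge0$ there is a graph homomorphism $K:G\times I_n\to H$ (tensor product: $((x,i),(x',j))$ an edge iff $(x,x')\in E(G)$ and $|i-j|\le1$) with $K(x,0)=f(x)$ and $K(x,n)=g(x)$; this generates an equivalence relation $\simeq_\times$. $f:G\to H$ is a $\times$-homotopy equivalence if there is $h:H\to G$ with $hf\simeq_\times\mathrm{id}_G$ and $fh\simeq_\times\mathrm{id}_H$. *)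

From Stdlib Require Import List Arith Relations.
Import ListNotations.

Record graph := Graph {
  V : Type;
  E : V -> V -> Prop;
  E_sym : forall x y, E x y -> E y x
}.

Definition locally_finite (G : graph) : Prop :=
  forall v : V G, exists l : list (V G), forall w, E G v w -> In w l.

Definition nonempty_graph (G : graph) : Prop := inhabited (V G).

(* Vertices of the neighborhood complex: non-isolated vertices. *)
Definition nonisolated (G : graph) (v : V G) : Prop := exists w, E G v w.

Definition NVert (G : graph) : Type := { v : V G | nonisolated G v }.

Definition N_simplex (G : graph) (s : list (NVert G)) : Prop :=
  exists v : V G, forall x, In x s -> E G v (proj1_sig x).

Definition N_iso (G H : graph) : Prop :=
  exists (f : NVert G -> NVert H) (g : NVert H -> NVert G),
    (forall x, g (f x) = x) /\ (forall y, f (g y) = y) /\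
    (forall s : list (NVert G), N_simplex G s <-> N_simplex H (map f s)).

Definition K2x (G : graph) : graph.
Proof.
  refine (Graph (bool * V G)
            (fun p q => fst p <> fst q /\ E G (snd p) (snd q)) _).
  intros [i x] [j y] [H1 H2]; simpl in *; split.
  - intro e; apply H1; symmetry; exact e.
  - apply E_sym; exact H2.
Defined.

Definition is_hom (G H : graph) (f : V G -> V H) : Prop :=
  forall x y, E G x y -> E H (f x) (f y).

(* One-step x-homotopy: a homomorphism K : G x I_n -> H with K(-,0)=f,
   K(-,n)=g. The vertex (x,i) of G x I_n (0<=i<=n) is sent to K x i. *)
Definition xhomotopic_step (G H : graph) (f g : V G -> V H) : Prop :=
  exists (n : nat) (K : V G -> nat -> V H),
    (forall x x' i j, i <= n -> j <= n -> E G x x' ->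
        (i <= j + 1 /\ j <= i + 1) -> E H (K x i) (K x' j)) /\
    (forall x, K x 0 = f x) /\ (forall x, K x n = g x).

Definition xhomotopic (G H : graph) : (V G -> V H) -> (V G -> V H) -> Prop :=
  clos_refl_sym_trans _ (xhomotopic_step G H).

Definition xhomotopy_equivalent (G H : graph) : Prop :=
  exists (f : V G -> V H) (h : V H -> V G),
    is_hom G H f /\ is_hom H G h /\
    xhomotopic G G (fun x => h (f x)) (fun x => x) /\
    xhomotopic H H (fun y => f (h y)) (fun y => y).

(* An isomorphism φ : N(G) → N(H) sends each neighbourhood N(y), a simplex of
   N(G) that is finite by local finiteness, to a simplex of N(H), i.e. into
   N(c y) for some vertex c y.  Then (1, x) ↦ (1, φ x), (2, y) ↦ (2, c y) is a
   homomorphism K₂ × G → K₂ × H.  Composed with the analogous map built from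
   φ⁻¹ it fixes the first layer on non-isolated vertices, so for every edge
   v v' it sends v to a neighbour of v'; this makes it ×-homotopic to the
   identity in a single step. *)

From Stdlib Require Import List Relations.
From Stdlib Require Import Classical ClassicalEpsilon ProofIrrelevance Lia.
Import ListNotations.

Lemma NVert_ext (G : graph) (x y : NVert G) : proj1_sig x = proj1_sig y -> x = y.
Proof.
  destruct x as [x p], y as [y q]; simpl; intros <-.
  f_equal; apply proof_irrelevance.
Qed.

Lemma xhomotopic_of_adjacent (A B : graph) (f g : V A -> V B) :
  is_hom A B f -> is_hom A B g ->
  (forall x x', E A x x' -> E B (f x) (g x')) ->
  xhomotopic A B f g.
Proof.
  intros Hf Hg Hfg; apply rst_step.
  exists 1, (fun x i => match i with 0 => f x | _ => g x end).
  split; [|split; reflexivity].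
  intros x x' i j Hi Hj Hxx' _.
  destruct i as [|[|i]], j as [|[|j]]; try lia; auto.
  apply E_sym, Hfg, E_sym, Hxx'.
Qed.

Section SimplicialMaps.

Variables G H : graph.

Lemma nbhd_simplex (y : V G) :
  locally_finite G ->
  exists s : list (NVert G),
    (forall x, In x s -> E G y (proj1_sig x)) /\
    (forall x : NVert G, E G y (proj1_sig x) -> In x s).
Proof.
  intros HlG; destruct (HlG y) as [l Hl].
  assert (Hcover : exists s : list (NVert G),
    (forall x, In x s -> E G y (proj1_sig x)) /\
    (forall x : NVert G, E G y (proj1_sig x) -> In (proj1_sig x) l -> In x s)).
  { clear Hl; induction l as [|a l [s [Hs Hcov]]].
    - exists []; split; simpl; tauto.
    - destruct (classic (E G y a)) as [Hya|Hya].
      + pose (a' := exist (nonisolated G) a (ex_intro _ y (E_sym _ _ _ Hya))).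
        exists (a' :: s); split.
        * intros x [<-|Hx]; auto.
        * intros x Hyx [Hxa|Hxl]; [left; apply NVert_ext, Hxa|right; auto].
      + exists s; split; auto.
        intros x Hyx [Hxa|Hxl]; [rewrite Hxa in Hya; contradiction|auto]. }
  destruct Hcover as [s [Hs Hcov]]; exists s; split; auto.
Qed.

Lemma simplicial_common_neighbor (phi : NVert G -> NVert H) :
  (forall s, N_simplex G s -> N_simplex H (map phi s)) ->
  locally_finite G ->
  exists c : V G -> V H,
    forall y (x : NVert G), E G y (proj1_sig x) -> E H (c y) (proj1_sig (phi x)).
Proof.
  intros Hphi HlG.
  apply (choice (fun y w => forall x : NVert G,
    E G y (proj1_sig x) -> E H w (proj1_sig (phi x)))); intros y.
  destruct (nbhd_simplex y HlG) as [s [Hs Hnbhd]].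
  destruct (Hphi s (ex_intro _ y Hs)) as [w Hw].
  exists w; intros x Hyx; apply Hw, in_map, Hnbhd, Hyx.
Qed.

Lemma N_simplex_map_inverse (phi : NVert G -> NVert H) (psi : NVert H -> NVert G) :
  (forall y, phi (psi y) = y) ->
  (forall s, N_simplex G s <-> N_simplex H (map phi s)) ->
  forall t, N_simplex H t -> N_simplex G (map psi t).
Proof.
  intros Hphipsi Hphi t Ht; apply Hphi.
  rewrite map_map, (map_ext _ _ Hphipsi), map_id; exact Ht.
Qed.

Definition extend_NVert (phi : NVert G -> NVert H) (dflt : V G -> V H)
  (x : V G) : V H :=
  match excluded_middle_informative (nonisolated G x) with
  | left p => proj1_sig (phi (exist _ x p))
  | right _ => dflt x
  end.

Lemma extend_NVert_eq phi dflt (x : NVert G) :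
  extend_NVert phi dflt (proj1_sig x) = proj1_sig (phi x).
Proof.
  destruct x as [x p]; unfold extend_NVert; simpl.
  destruct (excluded_middle_informative _) as [q|q]; [|contradiction].
  rewrite (proof_irrelevance _ q p); reflexivity.
Qed.

Lemma extend_NVert_common_neighbor phi (c : V G -> V H) :
  (forall y (x : NVert G), E G y (proj1_sig x) -> E H (c y) (proj1_sig (phi x))) ->
  forall y x, E G y x -> E H (c y) (extend_NVert phi c x).
Proof.
  intros Hc y x Hyx.
  pose (x' := exist (nonisolated G) x (ex_intro _ y (E_sym _ _ _ Hyx))).
  change x with (proj1_sig x'); rewrite extend_NVert_eq; apply Hc, Hyx.
Qed.

Definition K2x_map (F c : V G -> V H) (v : V (K2x G)) : V (K2x H) :=
  let (b, x) := v in if b then (true, F x) else (false, c x).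

Lemma K2x_map_hom (F c : V G -> V H) :
  (forall y x, E G y x -> E H (c y) (F x)) -> is_hom (K2x G) (K2x H) (K2x_map F c).
Proof.
  intros Hc [[] x] [[] x'] [Hb Hxx']; simpl in *;
    try (exfalso; apply Hb; reflexivity); split; try discriminate.
  - apply E_sym, Hc, E_sym, Hxx'.
  - apply Hc, Hxx'.
Qed.

End SimplicialMaps.

Lemma extend_NVert_inverse (G H : graph) (phi : NVert G -> NVert H)
  (psi : NVert H -> NVert G) c d :
  (forall x, psi (phi x) = x) ->
  forall x, nonisolated G x -> extend_NVert H G psi d (extend_NVert G H phi c x) = x.
Proof.
  intros Hpsiphi x p.
  change x with (proj1_sig (exist (nonisolated G) x p)).
  rewrite !extend_NVert_eq, Hpsiphi; reflexivity.
Qed.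

Lemma K2x_map_comp_adjacent (G H : graph) (F c : V G -> V H) (F' d : V H -> V G) :
  (forall y x, E G y x -> E H (c y) (F x)) ->
  (forall y x, E H y x -> E G (d y) (F' x)) ->
  (forall x, nonisolated G x -> F' (F x) = x) ->
  forall v v', E (K2x G) v v' -> E (K2x G) (K2x_map H G F' d (K2x_map G H F c v)) v'.
Proof.
  intros Hc Hd Hinv [[] x] [[] x'] [Hb Hxx']; simpl in *;
    try (exfalso; apply Hb; reflexivity); split; try discriminate.
  - rewrite Hinv; [exact Hxx'|exists x'; exact Hxx'].
  - rewrite <- (Hinv x') by (exists x; apply E_sym, Hxx').
    apply Hd, Hc, Hxx'.
Qed.

Lemma K2x_xhomotopy_equivalent (G H : graph) (F c : V G -> V H) (F' d : V H -> V G) :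
  (forall y x, E G y x -> E H (c y) (F x)) ->
  (forall y x, E H y x -> E G (d y) (F' x)) ->
  (forall x, nonisolated G x -> F' (F x) = x) ->
  (forall x, nonisolated H x -> F (F' x) = x) ->
  xhomotopy_equivalent (K2x G) (K2x H).
Proof.
  intros Hc Hd HF'F HFF'.
  pose proof (K2x_map_hom G H F c Hc) as Hf.
  pose proof (K2x_map_hom H G F' d Hd) as Hh.
  exists (K2x_map G H F c), (K2x_map H G F' d).
  split; [exact Hf|split; [exact Hh|split]];
    apply xhomotopic_of_adjacent; try (intros v v' e; exact e).
  - intros v v' e; apply Hh, Hf, e.
  - exact (K2x_map_comp_adjacent G H F c F' d Hc Hd HF'F).
  - intros v v' e; apply Hf, Hh, e.
  - exact (K2x_map_comp_adjacent H G F' d F c Hd Hc HFF').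
Qed.

Theorem proposition4p10 (G H : graph) :
  nonempty_graph G -> nonempty_graph H ->
  locally_finite G -> locally_finite H ->
  N_iso G H ->
  xhomotopy_equivalent (K2x G) (K2x H).
Proof.
  intros _ _ HlG HlH [phi [psi [Hpsiphi [Hphipsi Hphi]]]].
  destruct (simplicial_common_neighbor G H phi (fun s => proj1 (Hphi s)) HlG)
    as [c Hc].
  destruct (simplicial_common_neighbor H G psi
              (N_simplex_map_inverse G H phi psi Hphipsi Hphi) HlH) as [d Hd].
  apply (K2x_xhomotopy_equivalent G H
           (extend_NVert G H phi c) c (extend_NVert H G psi d) d).
  - exact (extend_NVert_common_neighbor G H phi c Hc).
  - exact (extend_NVert_common_neighbor H G psi d Hd).
  - exact (extend_NVert_inverse G H phi psi c d Hpsiphi).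
  - exact (extend_NVert_inverse H G psi phi d c Hphipsi).
Qed.
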